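(* Let $\Gamma$ be an Arf numerical semigroup with conductor $c$ and multiplicity $e\ge3$. Then $c+e-2$ or $c+e-3$ is an irreducible element of $\Gamma$.
   Context: A numerical semigroup is a subset $\Gamma\subseteq\mathbb N$ containing $0$, closed under addition, with finite complement; write $\Gamma=\{0=\rho_1<\rho_2<\cdots\}$; multiplicity $e=\rho_2$; conductor $c$ = least integer with $c+\mathbb N\subseteq\Gamma$. $\Gamma$ is Arf if $\rho_i+\rho_j-\rho_k\in\Gamma$ for all $i\ge j\ge k$. A nonzero $s\in\Gamma$ is irreducible if it cannot be written as a sum of two nonzero elements of $\Gamma$ (equivalently, its only divisors $t\in\Gamma$ with $s-t\in\Gamma$ are $0$ and $s$). *)

From mathcomp Require Import all_boot.
Set Implicit Arguments. Unset Strict Implicit. Unset Printing Implicit Defensive.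

Definition numerical_semigroup (S : pred nat) : Prop :=
  [/\ S 0,
      (forall x y, S x -> S y -> S (x + y)) &
      exists N, forall n, N <= n -> S n].

Definition is_conductor (S : pred nat) (c : nat) : Prop :=
  (forall n, c <= n -> S n) /\ (forall m, (forall n, m <= n -> S n) -> c <= m).

Definition is_multiplicity (S : pred nat) (e : nat) : Prop :=
  [/\ 0 < e, S e & forall x, 0 < x -> S x -> e <= x].

(* Arf: rho_i + rho_j - rho_k in S for i >= j >= k, i.e. x + y - z in S for
   elements x >= y >= z of S. *)
Definition arf (S : pred nat) : Prop :=
  forall x y z, S x -> S y -> S z -> y <= x -> z <= y -> S (x + y - z).

Definition irreducible (S : pred nat) (s : nat) : Prop :=
  [/\ S s, 0 < s & forall a b, S a -> S b -> 0 < a -> 0 < b -> a + b <> s].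

(* If s = a + b with a, b nonzero elements of an Arf semigroup of multiplicity
   e, then the Arf condition applied to a >= b >= e puts s - e in the
   semigroup, and s >= 2e, which forces c >= e + 2 (so c - 3 is not a
   truncated difference).  So if both c + e - 2 and c + e - 3 were
   reducible, the consecutive integers c - 3 and c - 2 would lie in the
   semigroup, and the Arf condition applied to (c - 2, c - 2, c - 3) would put
   the gap c - 1 in it as well. *)

From mathcomp Require Import all_boot zify.
From Stdlib Require Import Classical.

Set Implicit Arguments.
Unset Strict Implicit.
Unset Printing Implicit Defensive.

Section ArfSemigroup.

Variable S : pred nat.
Hypothesis arfS : arf S.

Lemma not_irreducible_sum s : S s -> 0 < s -> ~ irreducible S s ->
  exists a b, [/\ S a, S b, 0 < a, 0 < b & a + b = s].
Proof.
move=> Ss s_gt0 red_s; apply: NNPP => no_split; apply: red_s.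
split=> // a b Sa Sb a_gt0 b_gt0 def_s.
by apply: no_split; exists a, b.
Qed.

Lemma arf_consecutiveS n : S n -> S n.+1 -> S n.+2.
Proof.
move=> Sn Sn1; have := arfS Sn1 Sn1 Sn (leqnn _) (leqnSn n).
by have -> : n.+1 + n.+1 - n = n.+2 by lia.
Qed.

Variable e : nat.
Hypothesis multS : is_multiplicity S e.

Lemma arf_addB_mult a b : S a -> S b -> 0 < a -> 0 < b -> S (a + b - e).
Proof.
case: multS => _ Se min_e Sa Sb a_gt0 b_gt0.
have [le_ba | lt_ab] := leqP b a; first exact: arfS le_ba (min_e b b_gt0 Sb).
by rewrite addnC; apply: arfS (ltnW lt_ab) (min_e a a_gt0 Sa).
Qed.

Lemma arf_reducible s : S s -> 0 < s -> ~ irreducible S s ->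
  e.*2 <= s /\ S (s - e).
Proof.
move=> Ss s_gt0 red_s; have [a [b [Sa Sb a_gt0 b_gt0 <-]]] := not_irreducible_sum Ss s_gt0 red_s.
case: multS => _ _ min_e; split; last exact: arf_addB_mult.
by rewrite -addnn leq_add ?min_e.
Qed.

End ArfSemigroup.

Lemma conductor_predN (S : pred nat) c : is_conductor S c -> 0 < c -> ~ S c.-1.
Proof.
case=> Sge_c min_c c_gt0 Sc1.
suff : c <= c.-1 by rewrite leqNgt prednK ?leqnn.
apply: min_c => n; rewrite leq_eqVlt => /orP[/eqP <- // | lt_c1n].
by apply: Sge_c; rewrite -(prednK c_gt0).
Qed.

Theorem proposition4p7 (S : pred nat) (c e : nat) :
  numerical_semigroup S -> arf S -> is_conductor S c -> is_multiplicity S e ->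
  3 <= e ->
  irreducible S (c + e - 2) \/ irreducible S (c + e - 3).
Proof.
move=> _ arfS condS multS e_ge3.
case: (classic (irreducible S (c + e - 2))) => [|red2]; [by left | right].
apply: NNPP => red3.
have [Sge_c _] := condS.
have [le_2e Sc2] := arf_reducible arfS multS (Sge_c (c + e - 2) ltac:(lia)) ltac:(lia) red2.
have c_ge3 : 3 <= c by move: le_2e; rewrite -addnn; lia.
have [_ Sc3] := arf_reducible arfS multS (Sge_c (c + e - 3) ltac:(lia)) ltac:(lia) red3.
rewrite (_ : c + e - 2 - e = (c - 3).+1) in Sc2; last by lia.
rewrite (_ : c + e - 3 - e = c - 3) in Sc3; last by lia.
apply: (conductor_predN condS (leq_trans _ c_ge3)) => //.
by rewrite (_ : c.-1 = (c - 3).+2); [apply: arf_consecutiveS | lia].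
Qed.
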